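(* Assume the hypotheses listed in the context. Then there exists $\delta^*>0$ with the following property: if $0<\delta_1,\delta_2\le\delta^*$ and, for $i=1,2$, $W^i=(w^i_1,\dots,w^i_n)\in C^1([-\delta_i,\delta_i];\mathbb R^n)$ with $w^i_1([-\delta_i,\delta_i])\subseteq[-\delta_i,\delta_i]$ satisfies $(W^i)'(t)=H(t;W^i(t),W^i(w^i_1(t));(W^i)'(t),(W^i)'(w^i_1(t)))$ for $|t|\le\delta_i$, $W^i(0)=0$, $(W^i)'(0)=P$, and $(t;W^i(t),W^i(w^i_1(t));(W^i)'(t),(W^i)'(w^i_1(t)))\in N_\varepsilon(\mathcal P)$ for $|t|\le\delta_i$, then $W^1=W^2$ on $[-\min(\delta_1,\delta_2),\min(\delta_1,\delta_2)]$.
   Context: Hypotheses: $\|\cdot\|$ is a norm on $\mathbb R^n$; $H=(h_1,\dots,h_n)$ is continuous from an open subset of $\mathbb R^{4n+1}$ to $\mathbb R^n$, written $H(t;\zeta^0,\zeta^1;\xi^0,\xi^1)$; $P=(p_1,\dots,p_n)$ satisfies $P=H(0;\mathbf0,\mathbf0;P,P)$ and $|p_1|\le1$; $\mathcal P=(0;\mathbf0,\mathbf0;P,P)$; $N_\varepsilon(\mathcal P)=\{(t;\zeta^0,\zeta^1;\xi^0,\xi^1):|t|+\|\zeta^0\|+\|\zeta^1\|+\|\xi^0-P\|+\|\xi^1-P\|\le\varepsilon\}$ lies in the domain of $H$, and on it: (i) $H$ is $\Lambda$-Lipschitz in $t$; (ii) $\|H(t;\bar\zeta^0,\bar\zeta^1;\xi^0,\xi^1)-H(t;\zeta^0,\zeta^1;\xi^0,\xi^1)\|\le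 L_0\|\bar\zeta^0-\zeta^0\|+L_1\|\bar\zeta^1-\zeta^1\|$; (iii) $\|H(t;\zeta^0,\zeta^1;\bar\xi^0,\bar\xi^1)-H(t;\zeta^0,\zeta^1;\xi^0,\xi^1)\|\le C_0\|\bar\xi^0-\xi^0\|+C_1\|\bar\xi^1-\xi^1\|$ with $C_0+C_1<1$; (iv) $|h_1|\le1$. *)

From Stdlib Require Import Reals Lra.
From Stdlib Require Fin.
Open Scope R_scope.

Definition vec (n : nat) := Fin.t n -> R.

Definition vzero {n} : vec n := fun _ => 0.
Definition vadd {n} (x y : vec n) : vec n := fun i => x i + y i.
Definition vsub {n} (x y : vec n) : vec n := fun i => x i - y i.
Definition vscale {n} (c : R) (x : vec n) : vec n := fun i => c * x i.

Definition is_norm {n} (nrm : vec n -> R) : Prop :=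
  (forall x, 0 <= nrm x) /\
  (forall x, nrm x = 0 -> forall i, x i = 0) /\
  (forall c x, nrm (vscale c x) = Rabs c * nrm x) /\
  (forall x y, nrm (vadd x y) <= nrm x + nrm y).

(* Points (t; z0, z1; x0, x1) of R^{4n+1} are given as 5 separate arguments.
   Distance on R^{4n+1} built from the norm (all norms are equivalent). *)
Definition dist5 {n} (nrm : vec n -> R)
  (t : R) (z0 z1 x0 x1 : vec n) (t' : R) (z0' z1' x0' x1' : vec n) : R :=
  Rabs (t - t') + nrm (vsub z0 z0') + nrm (vsub z1 z1')
  + nrm (vsub x0 x0') + nrm (vsub x1 x1').

Definition open5 {n} (nrm : vec n -> R)
  (U : R -> vec n -> vec n -> vec n -> vec n -> Prop) : Prop :=
  forall t z0 z1 x0 x1, U t z0 z1 x0 x1 ->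
    exists r, 0 < r /\ forall t' z0' z1' x0' x1',
      dist5 nrm t' z0' z1' x0' x1' t z0 z1 x0 x1 < r -> U t' z0' z1' x0' x1'.

Definition continuous_on5 {n} (nrm : vec n -> R)
  (U : R -> vec n -> vec n -> vec n -> vec n -> Prop)
  (H : R -> vec n -> vec n -> vec n -> vec n -> vec n) : Prop :=
  forall t z0 z1 x0 x1, U t z0 z1 x0 x1 ->
    forall eps, 0 < eps -> exists d, 0 < d /\ forall t' z0' z1' x0' x1',
      U t' z0' z1' x0' x1' ->
      dist5 nrm t' z0' z1' x0' x1' t z0 z1 x0 x1 < d ->
      nrm (vsub (H t' z0' z1' x0' x1') (H t z0 z1 x0 x1)) < eps.

Definition Neps {n} (nrm : vec n -> R) (eps : R) (P : vec n)
  (t : R) (z0 z1 x0 x1 : vec n) : Prop :=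
  Rabs t + nrm z0 + nrm z1 + nrm (vsub x0 P) + nrm (vsub x1 P) <= eps.

Definition C1_on {n} (a b : R) (W W' : R -> vec n) : Prop :=
  (forall t, a <= t <= b -> forall i : Fin.t n,
     forall eps, 0 < eps -> exists d, 0 < d /\ forall h, h <> 0 -> Rabs h < d ->
       a <= t + h <= b ->
       Rabs ((W (t + h) i - W t i) / h - W' t i) < eps) /\
  (forall t, a <= t <= b -> forall i : Fin.t n,
     forall eps, 0 < eps -> exists d, 0 < d /\ forall s, a <= s <= b ->
       Rabs (s - t) < d -> Rabs (W' s i - W' t i) < eps).

From Stdlib Require Import Reals Lra FunctionalExtensionality ClassicalEpsilon.
Open Scope R_scope.

(* Along a solution in N_eps(P) the first coordinate w_1 is 1-Lipschitz because
   |h_1| <= 1, so the delayed time w_1(t) stays in [-|t|, |t|].  Hypotheses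
   (i)-(iii) with C0 + C1 < 1 then make the suprema of |W' - P| and of the
   difference quotients of W' satisfy contraction inequalities: W' stays within
   O(delta) of P and is Lipschitz with a constant independent of delta.  For two
   solutions, the supremum M of |W1' - W2'| on the common interval satisfies
   M <= (k delta + C0 + C1) M, hence M = 0 once delta is small, and W1 = W2
   because both vanish at 0.  Since derivatives are given coordinatewise, the
   norm is compared with the coordinates throughout. *)

Lemma Rabs_le_iff x a : Rabs x <= a <-> - a <= x <= a.
Proof. split; [|apply Rabs_le]. unfold Rabs; destruct Rcase_abs; lra. Qed.

Definition vcons {n} (a : R) (y : vec n) : vec (S n) :=
  fun i => Fin.caseS' i (fun _ => R) a y.
Definition vtail {n} (x : vec (S n)) : vec n := fun j => x (Fin.FS j).
Definition vunit {n} : vec (S n) := vcons 1 vzero.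

Lemma vec_ext {n} (x y : vec n) : (forall i, x i = y i) -> x = y.
Proof. intros; apply functional_extensionality; auto. Qed.

Ltac vec_ring :=
  apply vec_ext; let i := fresh "i" in intro i;
  unfold vunit, vadd, vsub, vscale, vzero;
  first [ring | apply (Fin.caseS' i); intros; simpl; ring].

Lemma vec_eta {n} (x : vec (S n)) : x = vcons (x Fin.F1) (vtail x).
Proof. apply vec_ext; intro i. apply (Fin.caseS' i); reflexivity. Qed.

Lemma vec0_eq (x : vec 0) : x = vzero.
Proof. apply vec_ext; intro i. apply (Fin.case0 (fun _ => _) i). Qed.

Lemma vcons_scale {n} c a (y : vec n) : vscale c (vcons a y) = vcons (c * a) (vscale c y).
Proof. vec_ring. Qed.

Lemma vcons_add {n} a b (y z : vec n) : vadd (vcons a y) (vcons b z) = vcons (a + b) (vadd y z).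
Proof. vec_ring. Qed.

Lemma vcons_split {n} a (y : vec n) : vcons a y = vadd (vscale a vunit) (vcons 0 y).
Proof. vec_ring. Qed.

Section Norm.
Context {n : nat} (N : vec n -> R) (HN : is_norm N).

Lemma norm_nonneg x : 0 <= N x. Proof. apply HN. Qed.
Lemma norm_eq0 x : N x = 0 -> forall i, x i = 0. Proof. apply HN. Qed.
Lemma normZ c x : N (vscale c x) = Rabs c * N x. Proof. apply HN. Qed.
Lemma norm_add_le x y : N (vadd x y) <= N x + N y. Proof. apply HN. Qed.

Lemma norm_zero : N vzero = 0.
Proof.
  replace (vzero : vec n) with (vscale 0 (vzero : vec n)) by vec_ring.
  rewrite normZ, Rabs_R0; ring.
Qed.

Lemma norm_sub_sym x y : N (vsub x y) = N (vsub y x).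
Proof.
  replace (vsub x y) with (vscale (- (1)) (vsub y x)) by vec_ring.
  rewrite normZ, Rabs_Ropp, Rabs_R1; ring.
Qed.

Lemma norm_sub_triangle x y z : N (vsub x z) <= N (vsub x y) + N (vsub y z).
Proof.
  replace (vsub x z) with (vadd (vsub x y) (vsub y z)) by vec_ring.
  apply norm_add_le.
Qed.

Lemma norm_sub0 x : N (vsub x vzero) = N x.
Proof. f_equal; vec_ring. Qed.

Lemma norm_sub_diag x : N (vsub x x) = 0.
Proof. replace (vsub x x) with (vzero : vec n) by vec_ring. apply norm_zero. Qed.

Lemma norm_sub_le x y : N (vsub x y) <= N x + N y.
Proof.
  rewrite <- (norm_sub0 x), <- (norm_sub0 y), (norm_sub_sym y).
  apply norm_sub_triangle.
Qed.

End Norm.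

Lemma is_norm_vcons0 {n} (N : vec (S n) -> R) :
  is_norm N -> is_norm (fun y : vec n => N (vcons 0 y)).
Proof.
  intros HN; split; [|split; [|split]].
  - intros; apply (norm_nonneg N HN).
  - intros y Hy i. apply (norm_eq0 N HN _ Hy (Fin.FS i)).
  - intros c y. rewrite <- (normZ N HN), vcons_scale, Rmult_0_r. reflexivity.
  - intros x y. rewrite <- (Rplus_0_l 0) at 1. rewrite <- vcons_add. apply (norm_add_le N HN).
Qed.

Lemma norm_le_sup : forall n (N : vec n -> R), is_norm N ->
  exists c, 0 <= c /\ forall x B, (forall i, Rabs (x i) <= B) -> N x <= c * B.
Proof.
  induction n as [|n IH]; intros N HN.
  - exists 0; split; [lra|]. intros x B _. rewrite (vec0_eq x), (norm_zero N HN). lra.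
  - destruct (IH _ (is_norm_vcons0 N HN)) as [c [Hc Htail]].
    exists (N vunit + c); split; [pose proof (norm_nonneg N HN vunit); lra|].
    intros x B Hx.
    pose proof (Hx Fin.F1) as Hx1.
    pose proof (Htail (vtail x) B (fun j => Hx (Fin.FS j))) as Hxt.
    pose proof (norm_nonneg N HN vunit).
    assert (HB : 0 <= B) by (pose proof (Rabs_pos (x Fin.F1)); lra).
    rewrite (vec_eta x), vcons_split.
    eapply Rle_trans; [apply (norm_add_le N HN)|]. rewrite (normZ N HN).
    assert (Rabs (x Fin.F1) * N vunit <= B * N vunit) by (apply Rmult_le_compat_r; lra).
    nra.
Qed.

Section QuotientNorm.
Context {n : nat} (N : vec (S n) -> R) (HN : is_norm N).

Lemma norm_vunit_pos : 0 < N vunit.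
Proof.
  destruct (Rle_lt_or_eq_dec 0 (N vunit) (norm_nonneg N HN vunit)) as [h|h]; auto.
  pose proof (norm_eq0 N HN vunit (eq_sym h) Fin.F1) as H1. simpl in H1. lra.
Qed.

Lemma norm_vcons_lipschitz a b y :
  Rabs (N (vcons a y) - N (vcons b y)) <= Rabs (a - b) * N vunit.
Proof.
  assert (E : forall a b, vcons a y = vadd (vscale (a - b) vunit) (vcons b y)).
  { intros a' b'. rewrite (vcons_split a'), (vcons_split b'). vec_ring. }
  pose proof (norm_add_le N HN (vscale (a - b) vunit) (vcons b y)) as H1.
  pose proof (norm_add_le N HN (vscale (b - a) vunit) (vcons a y)) as H2.
  rewrite <- E, (normZ N HN) in H1. rewrite <- E, (normZ N HN), Rabs_minus_sym in H2.
  apply Rabs_le; lra.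
Qed.

Lemma norm_vcons_min_attained y :
  exists q, (forall a, q <= N (vcons a y)) /\ exists a, q = N (vcons a y).
Proof.
  pose (psi a := N (vcons a y)).
  pose proof norm_vunit_pos as Hu.
  assert (Hcont : forall c, continuity_pt psi c).
  { intros c eps Heps. exists (eps / N vunit); split.
    - apply Rlt_gt, Rdiv_lt_0_compat; lra.
    - intros x [_ Hx]. simpl in *; unfold R_dist in *.
      eapply Rle_lt_trans; [apply norm_vcons_lipschitz|].
      apply (Rmult_lt_compat_r (N vunit)) in Hx; auto. field_simplify in Hx; lra. }
  set (r := 2 * psi 0 / N vunit).
  assert (Hr : r * N vunit = 2 * psi 0) by (unfold r; field; lra).
  assert (Hr0 : 0 <= r) by (pose proof (norm_nonneg N HN (vcons 0 y)); fold (psi 0) in *; nra).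
  destruct (continuity_ab_min psi (- r) r ltac:(lra) (fun c _ => Hcont c)) as [mx [Hmx _]].
  exists (psi mx); split; [|exists mx; reflexivity].
  intros a; fold (psi a).
  destruct (Rle_dec (Rabs a) r) as [h|h]; [apply Hmx; apply Rabs_le_iff, h|].
  assert (psi mx <= psi 0) by (apply Hmx; lra).
  assert (Ha : Rabs a * N vunit <= psi a + psi 0).
  { rewrite <- (normZ N HN).
    replace (vscale a vunit) with (vsub (vcons a y) (vcons 0 y)) by vec_ring.
    apply (norm_sub_le N HN). }
  assert (r * N vunit <= Rabs a * N vunit) by (apply Rmult_le_compat_r; lra).
  lra.
Qed.

Definition quotient_norm (y : vec n) : R :=
  proj1_sig (constructive_indefinite_description _ (norm_vcons_min_attained y)).

Lemma quotient_norm_spec y :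
  (forall a, quotient_norm y <= N (vcons a y)) /\ exists a, quotient_norm y = N (vcons a y).
Proof. unfold quotient_norm. destruct constructive_indefinite_description as [q Hq]. exact Hq. Qed.

Lemma is_norm_quotient_norm : is_norm quotient_norm.
Proof.
  split; [|split; [|split]].
  - intros y. destruct (quotient_norm_spec y) as [_ [a ->]]. apply (norm_nonneg N HN).
  - intros y Hy i. destruct (quotient_norm_spec y) as [_ [a Ha]]. rewrite Hy in Ha.
    exact (norm_eq0 N HN _ (eq_sym Ha) (Fin.FS i)).
  - intros c y. destruct (quotient_norm_spec y) as [Hy [a Ha]].
    destruct (quotient_norm_spec (vscale c y)) as [Hcy [b Hb]].
    apply Rle_antisym.
    + rewrite Ha, <- (normZ N HN), vcons_scale. apply Hcy.
    + destruct (Req_dec c 0) as [->|hc].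
      * rewrite Rabs_R0, Rmult_0_l, Hb. apply (norm_nonneg N HN).
      * rewrite Hb. replace (vcons b (vscale c y)) with (vscale c (vcons (b / c) y))
          by (rewrite vcons_scale; f_equal; field; exact hc).
        rewrite (normZ N HN). apply Rmult_le_compat_l; [apply Rabs_pos|apply Hy].
  - intros y z. destruct (quotient_norm_spec y) as [_ [a Ha]].
    destruct (quotient_norm_spec z) as [_ [b Hb]].
    destruct (quotient_norm_spec (vadd y z)) as [Hyz _].
    eapply Rle_trans; [apply (Hyz (a + b))|].
    rewrite Ha, Hb, <- vcons_add. apply (norm_add_le N HN).
Qed.

End QuotientNorm.

(* The tail coordinates are controlled inductively through the quotient norm
   [y |-> min_a N (a, y)], the first one by the triangle inequality. *)
Lemma coord_le_norm : forall n (N : vec n -> R), is_norm N ->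
  exists c, 0 < c /\ forall x i, Rabs (x i) <= c * N x.
Proof.
  induction n as [|n IH]; intros N HN.
  - exists 1; split; [lra|]. intros x i. apply (Fin.case0 (fun _ => _) i).
  - destruct (IH _ (is_norm_quotient_norm N HN)) as [c [Hc Htail]].
    destruct (norm_le_sup n _ (is_norm_vcons0 N HN)) as [c' [Hc' Hsup]].
    pose proof (norm_vunit_pos N HN) as Hu.
    set (k := (1 + c' * c) / N vunit).
    assert (Hk : 0 < k) by (unfold k; apply Rdiv_lt_0_compat; nra).
    exists (c + k); split; [lra|].
    intros x i.
    pose proof (norm_nonneg N HN x) as Hx.
    assert (Ht : forall j, Rabs (vtail x j) <= c * N x).
    { intros j. eapply Rle_trans; [apply Htail|]. apply Rmult_le_compat_l; [lra|].
      destruct (quotient_norm_spec N HN (vtail x)) as [Hq _].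
      rewrite (vec_eta x) at 2. apply Hq. }
    apply (Fin.caseS' i).
    + assert (H1 : Rabs (x Fin.F1) * N vunit <= N x + c' * (c * N x)).
      { rewrite <- (normZ N HN).
        replace (vscale (x Fin.F1) vunit) with (vsub x (vcons 0 (vtail x)))
          by (rewrite (vec_eta x) at 1; vec_ring).
        eapply Rle_trans; [apply (norm_sub_le N HN)|].
        apply Rplus_le_compat_l, Hsup, Ht. }
      assert (Rabs (x Fin.F1) <= k * N x).
      { unfold k. apply (Rmult_le_reg_r (N vunit)); auto. field_simplify; lra. }
      nra.
    + intros j. pose proof (Ht j). unfold vtail in *. nra.
Qed.

Definition has_derivative_on (a b : R) (f f' : R -> R) : Prop :=
  forall t, a <= t <= b -> forall eps, 0 < eps -> exists d, 0 < d /\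
    forall h, h <> 0 -> Rabs h < d -> a <= t + h <= b ->
    Rabs ((f (t + h) - f t) / h - f' t) < eps.

Lemma has_derivative_on_subinterval a b a' b' f f' :
  has_derivative_on a b f f' -> a <= a' -> b' <= b -> has_derivative_on a' b' f f'.
Proof.
  intros Hd Ha Hb t Ht eps Heps. destruct (Hd t ltac:(lra) eps Heps) as [d [Hd0 Hh]].
  exists d; split; auto. intros h h0 hd hi. apply Hh; auto; lra.
Qed.

Lemma has_derivative_on_minus a b f f' g g' :
  has_derivative_on a b f f' -> has_derivative_on a b g g' ->
  has_derivative_on a b (fun t => f t - g t) (fun t => f' t - g' t).
Proof.
  intros Hf Hg t Ht eps Heps.
  destruct (Hf t Ht (eps / 2) ltac:(lra)) as [d1 [Hd1 H1]].
  destruct (Hg t Ht (eps / 2) ltac:(lra)) as [d2 [Hd2 H2]].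
  exists (Rmin d1 d2); split; [apply Rmin_glb_lt; auto|].
  intros h h0 hd hi. pose proof (Rmin_l d1 d2); pose proof (Rmin_r d1 d2).
  specialize (H1 h h0 ltac:(lra) hi). specialize (H2 h h0 ltac:(lra) hi).
  replace ((f (t + h) - g (t + h) - (f t - g t)) / h - (f' t - g' t)) with
    (((f (t + h) - f t) / h - f' t) - ((g (t + h) - g t) / h - g' t)) by (field; auto).
  eapply Rle_lt_trans; [apply Rabs_triang|]. rewrite Rabs_Ropp. lra.
Qed.

Lemma C1_on_has_derivative {n} a b (W W' : R -> vec n) : C1_on a b W W' ->
  forall i, has_derivative_on a b (fun t => W t i) (fun t => W' t i).
Proof. intros [HD _] i t Ht eps Heps. apply (HD t Ht i eps Heps). Qed.

Section AffineExtension.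
Variables (a b : R) (f f' : R -> R).

(* Extending [f] affinely outside [a, b] turns one-sided derivatives at the
   endpoints into two-sided ones, so that [MVT_cor2] applies. *)
Definition affine_extension (u : R) : R :=
  if Rlt_dec u a then f a + f' a * (u - a)
  else if Rlt_dec b u then f b + f' b * (u - b) else f u.

Lemma affine_extension_in u : a <= u <= b -> affine_extension u = f u.
Proof.
  intros. unfold affine_extension.
  destruct (Rlt_dec u a); [lra|]. destruct (Rlt_dec b u); [lra|]. reflexivity.
Qed.

Lemma affine_extension_derivable : a < b -> has_derivative_on a b f f' ->
  forall c, a <= c <= b -> derivable_pt_lim affine_extension c (f' c).
Proof.
  intros Hab Hd c Hc eps Heps.
  destruct (Hd c Hc eps Heps) as [d [Hd0 Hdh]].
  destruct (Req_dec c a) as [->|Na]; [|destruct (Req_dec c b) as [->|Nb]].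
  - assert (Hp : 0 < Rmin d (b - a)) by (apply Rmin_glb_lt; lra).
    exists (mkposreal _ Hp); simpl. intros h hn hh.
    pose proof (Rmin_l d (b - a)); pose proof (Rmin_r d (b - a)).
    rewrite (affine_extension_in a) by lra.
    destruct (Rlt_dec h 0) as [hl|hl].
    + unfold affine_extension. destruct (Rlt_dec (a + h) a); [|lra].
      replace ((f a + f' a * (a + h - a) - f a) / h - f' a) with 0 by (field; auto).
      rewrite Rabs_R0; auto.
    + assert (Rabs h = h) by (apply Rabs_right; lra).
      rewrite affine_extension_in by lra. apply Hdh; auto; lra.
  - assert (Hp : 0 < Rmin d (b - a)) by (apply Rmin_glb_lt; lra).
    exists (mkposreal _ Hp); simpl. intros h hn hh.
    pose proof (Rmin_l d (b - a)); pose proof (Rmin_r d (b - a)).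
    rewrite (affine_extension_in b) by lra.
    destruct (Rlt_dec 0 h) as [hl|hl].
    + unfold affine_extension. destruct (Rlt_dec (b + h) a); [lra|].
      destruct (Rlt_dec b (b + h)); [|lra].
      replace ((f b + f' b * (b + h - b) - f b) / h - f' b) with 0 by (field; auto).
      rewrite Rabs_R0; auto.
    + assert (Rabs h = - h) by (apply Rabs_left1; lra).
      rewrite affine_extension_in by lra. apply Hdh; auto; lra.
  - assert (Hp : 0 < Rmin d (Rmin (c - a) (b - c)))
      by (apply Rmin_glb_lt; [lra|apply Rmin_glb_lt; lra]).
    exists (mkposreal _ Hp); simpl. intros h hn hh.
    pose proof (Rmin_l d (Rmin (c - a) (b - c))); pose proof (Rmin_r d (Rmin (c - a) (b - c))).
    pose proof (Rmin_l (c - a) (b - c)); pose proof (Rmin_r (c - a) (b - c)).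
    assert (hh' : - Rabs h <= h <= Rabs h) by (apply Rabs_le_iff; lra).
    rewrite !affine_extension_in by lra. apply Hdh; auto; lra.
Qed.

End AffineExtension.

Lemma mean_value_le (a b M : R) (f f' : R -> R) :
  has_derivative_on a b f f' -> (forall t, a <= t <= b -> Rabs (f' t) <= M) ->
  forall x y, a <= x <= b -> a <= y <= b -> Rabs (f y - f x) <= M * Rabs (y - x).
Proof.
  intros Hd HM.
  assert (Hlt : forall x y, a <= x <= b -> a <= y <= b -> x < y ->
                 Rabs (f y - f x) <= M * Rabs (y - x)).
  { intros x y Hx Hy Hxy.
    destruct (MVT_cor2 (affine_extension a b f f') f' x y Hxy) as [c [Hc1 Hc2]].
    - intros c Hc. apply affine_extension_derivable; auto; lra.
    - rewrite !affine_extension_in in Hc1 by lra. rewrite Hc1, Rabs_mult.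
      apply Rmult_le_compat_r; [apply Rabs_pos|]. apply HM; lra. }
  intros x y Hx Hy.
  destruct (Rtotal_order x y) as [h|[<-|h]]; auto.
  - rewrite !Rminus_diag, Rabs_R0.
    pose proof (Rabs_pos (f' x)); pose proof (HM x Hx); lra.
  - rewrite Rabs_minus_sym, (Rabs_minus_sym y). auto.
Qed.

Section NormEquivalence.
Context {n : nat} (N : vec n -> R) (c1 c2 : R).
Hypothesis Hc1 : 0 <= c1.
Hypothesis Hcoord : forall x i, Rabs (x i) <= c1 * N x.
Hypothesis Hsup : forall x B, (forall i, Rabs (x i) <= B) -> N x <= c2 * B.

Lemma mean_value_norm_le a b M (W W' : R -> vec n) :
  (forall i, has_derivative_on a b (fun t => W t i) (fun t => W' t i)) ->
  (forall u, a <= u <= b -> N (W' u) <= M) ->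
  forall t s, a <= t <= b -> a <= s <= b ->
  N (vsub (W t) (W s)) <= c2 * c1 * M * Rabs (t - s).
Proof.
  intros HD HM t s Ht Hs.
  rewrite !Rmult_assoc. apply Hsup. intros i. unfold vsub. rewrite <- Rmult_assoc.
  apply (mean_value_le a b _ _ _ (HD i)); auto.
  intros u Hu. eapply Rle_trans; [apply Hcoord|]. apply Rmult_le_compat_l; auto.
Qed.

End NormEquivalence.

Lemma le_of_sup_contraction {A} (D : A -> Prop) (g : A -> R) (B a C : R) :
  0 <= C < 1 -> (forall u, D u -> g u <= B) ->
  (forall M, (forall u, D u -> g u <= M) -> forall u, D u -> g u <= a + C * M) ->
  forall u, D u -> g u <= a / (1 - C).
Proof.
  intros HC HB Hstep u Du.
  set (S x := exists v, D v /\ x = g v).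
  assert (HSB : bound S) by (exists B; intros x [v [Dv ->]]; auto).
  destruct (completeness S HSB (ex_intro _ (g u) (ex_intro _ u (conj Du eq_refl))))
    as [M [HubM HlubM]].
  assert (HM : forall v, D v -> g v <= M) by (intros v Dv; apply HubM; exists v; auto).
  assert (M <= a + C * M).
  { apply HlubM. intros x [v [Dv ->]]. apply (Hstep M HM v Dv). }
  pose proof (HM u Du).
  apply (Rmult_le_reg_r (1 - C)); [lra|]. unfold Rdiv. rewrite Rmult_assoc, Rinv_l by lra. nra.
Qed.

Section DelayEquation.
Context {m : nat}.
Local Notation V := (vec (S m)).
Variables (nrm : V -> R) (H : R -> V -> V -> V -> V -> V) (P : V).
Variables (eps Lam L0 L1 C0 C1 c1 c2 : R).
Hypothesis Hnorm : is_norm nrm.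
Hypothesis HP : P = H 0 vzero vzero P P.
Hypothesis Heps : 0 < eps.
Hypotheses (HLam : 0 <= Lam) (HL0 : 0 <= L0) (HL1 : 0 <= L1) (HC0 : 0 <= C0) (HC1 : 0 <= C1).
Hypothesis Hi : forall t t' z0 z1 x0 x1,
  Neps nrm eps P t z0 z1 x0 x1 -> Neps nrm eps P t' z0 z1 x0 x1 ->
  nrm (vsub (H t' z0 z1 x0 x1) (H t z0 z1 x0 x1)) <= Lam * Rabs (t' - t).
Hypothesis Hii : forall t z0 z1 z0' z1' x0 x1,
  Neps nrm eps P t z0 z1 x0 x1 -> Neps nrm eps P t z0' z1' x0 x1 ->
  nrm (vsub (H t z0' z1' x0 x1) (H t z0 z1 x0 x1))
    <= L0 * nrm (vsub z0' z0) + L1 * nrm (vsub z1' z1).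
Hypothesis Hiii : forall t z0 z1 x0 x1 x0' x1',
  Neps nrm eps P t z0 z1 x0 x1 -> Neps nrm eps P t z0 z1 x0' x1' ->
  nrm (vsub (H t z0 z1 x0' x1') (H t z0 z1 x0 x1))
    <= C0 * nrm (vsub x0' x0) + C1 * nrm (vsub x1' x1).
Hypothesis HC : C0 + C1 < 1.
Hypothesis Hiv : forall t z0 z1 x0 x1,
  Neps nrm eps P t z0 z1 x0 x1 -> Rabs (H t z0 z1 x0 x1 Fin.F1) <= 1.
Hypotheses (Hc1 : 0 <= c1) (Hc2 : 0 <= c2).
Hypothesis Hcoord : forall x i, Rabs (x i) <= c1 * nrm x.
Hypothesis Hsup : forall x B, (forall i, Rabs (x i) <= B) -> nrm x <= c2 * B.

Local Notation nrm_nonneg := (norm_nonneg nrm Hnorm).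
Local Notation nrm_sub_triangle := (norm_sub_triangle nrm Hnorm).

Lemma Neps_le t z0 z1 x0 x1 : Neps nrm eps P t z0 z1 x0 x1 ->
  Rabs t <= eps /\ nrm z0 <= eps /\ nrm z1 <= eps /\
  nrm (vsub x0 P) <= eps /\ nrm (vsub x1 P) <= eps.
Proof.
  unfold Neps; intros. pose proof (Rabs_pos t).
  pose proof (nrm_nonneg z0); pose proof (nrm_nonneg z1).
  pose proof (nrm_nonneg (vsub x0 P)); pose proof (nrm_nonneg (vsub x1 P)). lra.
Qed.

Lemma H_sub_le t s z0 z1 x0 x1 z0' z1' x0' x1' :
  Neps nrm eps P t z0 z1 x0 x1 -> Neps nrm eps P s z0 z1 x0 x1 ->
  Neps nrm eps P s z0' z1' x0 x1 -> Neps nrm eps P s z0' z1' x0' x1' ->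
  nrm (vsub (H s z0' z1' x0' x1') (H t z0 z1 x0 x1)) <=
  Lam * Rabs (s - t) + L0 * nrm (vsub z0' z0) + L1 * nrm (vsub z1' z1)
  + C0 * nrm (vsub x0' x0) + C1 * nrm (vsub x1' x1).
Proof.
  intros N1 N2 N3 N4.
  pose proof (Hi _ _ _ _ _ _ N1 N2). pose proof (Hii _ _ _ _ _ _ _ N2 N3).
  pose proof (Hiii _ _ _ _ _ _ _ N3 N4).
  eapply Rle_trans; [apply (nrm_sub_triangle _ (H s z0' z1' x0 x1))|].
  eapply Rle_trans; [apply Rplus_le_compat_l, (nrm_sub_triangle _ (H s z0 z1 x0 x1))|].
  lra.
Qed.

Lemma H_sub_P_le t z0 z1 x0 x1 : Neps nrm eps P t z0 z1 x0 x1 ->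
  nrm (vsub (H t z0 z1 x0 x1) P) <=
  Lam * Rabs t + L0 * nrm z0 + L1 * nrm z1 + C0 * nrm (vsub x0 P) + C1 * nrm (vsub x1 P).
Proof.
  intros Hn. unfold Neps in Hn.
  pose proof (Rabs_pos t). pose proof (nrm_nonneg z0). pose proof (nrm_nonneg z1).
  pose proof (nrm_nonneg (vsub x0 P)). pose proof (nrm_nonneg (vsub x1 P)).
  pose proof (norm_zero nrm Hnorm). pose proof (norm_sub_diag nrm Hnorm P).
  rewrite HP at 1.
  eapply Rle_trans; [apply H_sub_le; unfold Neps; rewrite ?Rabs_R0; lra|].
  rewrite Rminus_0_r, !(norm_sub0 nrm). lra.
Qed.

(* [kW] and [kW'] bound the Lipschitz constants of a solution and of its derivative,
   [d * ksize <= eps] keeps points mixing data of two solutions inside N_eps(P), and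
   [kgap * d + (C0 + C1)] is the contraction rate for the gap between two solutions. *)
Definition kN := c2 * c1.
Definition kW := kN * (nrm P + eps).
Definition kW' := (Lam + (L0 + L1) * kW) / (1 - (C0 + C1)).
Definition kgap := kN * (L0 + L1 + c1 * (L1 * kW + C1 * kW')).
Definition ksize := 1 + 2 * kW + 2 * kW'.

Lemma kW_nonneg : 0 <= kW.
Proof. unfold kW, kN. pose proof (nrm_nonneg P). repeat apply Rmult_le_pos; lra. Qed.

Lemma kW'_nonneg : 0 <= kW'.
Proof.
  unfold kW'. pose proof kW_nonneg.
  apply Rmult_le_pos; [nra|]. left; apply Rinv_0_lt_compat; lra.
Qed.

Lemma kgap_nonneg : 0 <= kgap.
Proof.
  unfold kgap, kN. pose proof kW_nonneg; pose proof kW'_nonneg.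
  repeat apply Rmult_le_pos; try lra.
  assert (Hk : 0 <= L1 * kW + C1 * kW') by (apply Rplus_le_le_0_compat; apply Rmult_le_pos; auto).
  pose proof (Rmult_le_pos _ _ Hc1 Hk). lra.
Qed.

Lemma Neps_of_small d s z0 z1 x0 x1 :
  Rabs s <= d -> nrm z0 <= kW * d -> nrm z1 <= kW * d ->
  nrm (vsub x0 P) <= kW' * d -> nrm (vsub x1 P) <= kW' * d -> d * ksize <= eps ->
  Neps nrm eps P s z0 z1 x0 x1.
Proof. unfold Neps, ksize; intros; lra. Qed.

Section Solution.
Variables (d : R) (W W' : R -> V).
Hypothesis Hd : 0 < d.
Hypothesis HW : C1_on (- d) d W W'.
Hypothesis Hw : forall t, - d <= t <= d -> - d <= W t Fin.F1 <= d.
Hypothesis Hsol : forall t, - d <= t <= d ->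
  W' t = H t (W t) (W (W t Fin.F1)) (W' t) (W' (W t Fin.F1)).
Hypothesis HW0 : W 0 = vzero.
Hypothesis HNW : forall t, - d <= t <= d ->
  Neps nrm eps P t (W t) (W (W t Fin.F1)) (W' t) (W' (W t Fin.F1)).

Lemma first_coord_lipschitz t s : - d <= t <= d -> - d <= s <= d ->
  Rabs (W t Fin.F1 - W s Fin.F1) <= Rabs (t - s).
Proof.
  intros Ht Hs. rewrite <- (Rmult_1_l (Rabs (t - s))).
  apply (mean_value_le (- d) d 1 _ _ (C1_on_has_derivative _ _ _ _ HW Fin.F1)); auto.
  intros u Hu. rewrite Hsol by exact Hu. apply Hiv, HNW, Hu.
Qed.

Lemma first_coord_small t : - d <= t <= d -> Rabs (W t Fin.F1) <= Rabs t.
Proof.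
  intros Ht. pose proof (first_coord_lipschitz t 0 Ht ltac:(lra)) as H0.
  rewrite HW0 in H0. unfold vzero in H0. rewrite !Rminus_0_r in H0. exact H0.
Qed.

Lemma W_lipschitz t s : - d <= t <= d -> - d <= s <= d ->
  nrm (vsub (W t) (W s)) <= kW * Rabs (t - s).
Proof.
  intros Ht Hs. unfold kW, kN.
  apply (mean_value_norm_le nrm c1 c2 Hc1 Hcoord Hsup (- d) d _ W W');
    [apply C1_on_has_derivative, HW| |auto|auto].
  intros u Hu. rewrite <- (norm_sub0 nrm (W' u)).
  eapply Rle_trans; [apply (nrm_sub_triangle _ P)|].
  rewrite (norm_sub0 nrm). pose proof (Neps_le _ _ _ _ _ (HNW u Hu)). lra.
Qed.

Lemma W_small t : - d <= t <= d -> nrm (W t) <= kW * d.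
Proof.
  intros Ht. pose proof (W_lipschitz t 0 Ht ltac:(lra)) as H0.
  rewrite HW0, (norm_sub0 nrm), Rminus_0_r in H0.
  pose proof kW_nonneg. assert (Rabs t <= d) by (apply Rabs_le_iff; lra). nra.
Qed.

Lemma W'_near_P t : - d <= t <= d -> nrm (vsub (W' t) P) <= kW' * d.
Proof.
  replace (kW' * d) with ((Lam + (L0 + L1) * kW) * d / (1 - (C0 + C1)))
    by (unfold kW'; field; lra).
  apply (le_of_sup_contraction (fun u => - d <= u <= d) (fun u => nrm (vsub (W' u) P)) eps);
    [lra|intros u Hu; apply (Neps_le _ _ _ _ _ (HNW u Hu))|].
  intros M HM u Hu. pose proof (Hw u Hu) as Hwu.
  rewrite Hsol at 1 by exact Hu.
  eapply Rle_trans; [apply H_sub_P_le, HNW, Hu|].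
  pose proof (W_small u Hu). pose proof (W_small _ Hwu).
  pose proof (HM u Hu). pose proof (HM _ Hwu).
  assert (Rabs u <= d) by (apply Rabs_le_iff; lra).
  pose proof kW_nonneg. nra.
Qed.

Hypothesis Hsmall : d * ksize <= eps.

Lemma Neps_along s u v : - d <= s <= d -> - d <= u <= d -> - d <= v <= d ->
  Neps nrm eps P s (W u) (W (W u Fin.F1)) (W' v) (W' (W v Fin.F1)).
Proof.
  intros Hs Hu Hv. apply (Neps_of_small d); auto; try apply Rabs_le_iff, Hs;
    [apply W_small|apply W_small|apply W'_near_P|apply W'_near_P]; auto.
Qed.

Lemma W'_lipschitz t s : - d <= t <= d -> - d <= s <= d ->
  nrm (vsub (W' t) (W' s)) <= kW' * Rabs (t - s).
Proof.
  intros Ht Hs. set (h := Rabs (t - s)).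
  replace (kW' * h) with ((Lam + (L0 + L1) * kW) * h / (1 - (C0 + C1)))
    by (unfold kW'; field; lra).
  pose (D (p : R * R) := - d <= fst p <= d /\ - d <= snd p <= d /\ Rabs (fst p - snd p) <= h).
  refine (le_of_sup_contraction D (fun p => nrm (vsub (W' (fst p)) (W' (snd p)))) (2 * eps)
            _ _ _ _ _ (t, s) _); [lra| | |split; [|split]; simpl; auto; apply Rle_refl].
  - intros [u v] [Hu [Hv _]]; simpl.
    pose proof (nrm_sub_triangle (W' u) P (W' v)) as Htri.
    rewrite (norm_sub_sym nrm Hnorm P) in Htri.
    pose proof (Neps_le _ _ _ _ _ (HNW u Hu)). pose proof (Neps_le _ _ _ _ _ (HNW v Hv)). lra.
  - intros M HM [u v] [Hu [Hv Huv]]; simpl in *.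
    pose proof (Hw u Hu) as Hwu. pose proof (Hw v Hv) as Hwv.
    rewrite (Hsol u Hu) at 1. rewrite (Hsol v Hv) at 1.
    eapply Rle_trans; [apply (H_sub_le v u); apply Neps_along; auto|].
    pose proof (W_lipschitz u v Hu Hv). pose proof (W_lipschitz _ _ Hwu Hwv).
    pose proof (first_coord_lipschitz u v Hu Hv) as Hwuv.
    pose proof (HM (u, v) (conj Hu (conj Hv Huv))).
    assert (Hwh : Rabs (W u Fin.F1 - W v Fin.F1) <= h) by lra.
    pose proof (HM (W u Fin.F1, W v Fin.F1) (conj Hwu (conj Hwv Hwh))).
    simpl in *. pose proof kW_nonneg.
    assert (kW * Rabs (u - v) <= kW * h) by (apply Rmult_le_compat_l; lra).
    assert (kW * Rabs (W u Fin.F1 - W v Fin.F1) <= kW * h) by (apply Rmult_le_compat_l; lra).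
    apply Rle_trans with (Lam * h + L0 * (kW * h) + L1 * (kW * h) + C0 * M + C1 * M); [|lra].
    repeat apply Rplus_le_compat; apply Rmult_le_compat_l; lra.
Qed.

End Solution.

Section TwoSolutions.
Variables (d1 d2 : R) (W1 W1' W2 W2' : R -> V).
Hypotheses (Hd1 : 0 < d1) (Hd2 : 0 < d2).
Hypotheses (HW1 : C1_on (- d1) d1 W1 W1') (HW2 : C1_on (- d2) d2 W2 W2').
Hypothesis Hw1 : forall t, - d1 <= t <= d1 -> - d1 <= W1 t Fin.F1 <= d1.
Hypothesis Hw2 : forall t, - d2 <= t <= d2 -> - d2 <= W2 t Fin.F1 <= d2.
Hypothesis Hsol1 : forall t, - d1 <= t <= d1 ->
  W1' t = H t (W1 t) (W1 (W1 t Fin.F1)) (W1' t) (W1' (W1 t Fin.F1)).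
Hypothesis Hsol2 : forall t, - d2 <= t <= d2 ->
  W2' t = H t (W2 t) (W2 (W2 t Fin.F1)) (W2' t) (W2' (W2 t Fin.F1)).
Hypotheses (HW10 : W1 0 = vzero) (HW20 : W2 0 = vzero).
Hypothesis HNW1 : forall t, - d1 <= t <= d1 ->
  Neps nrm eps P t (W1 t) (W1 (W1 t Fin.F1)) (W1' t) (W1' (W1 t Fin.F1)).
Hypothesis HNW2 : forall t, - d2 <= t <= d2 ->
  Neps nrm eps P t (W2 t) (W2 (W2 t Fin.F1)) (W2' t) (W2' (W2 t Fin.F1)).
Hypotheses (Hsmall1 : d1 * ksize <= eps) (Hsmall2 : d2 * ksize <= eps).

Local Notation de := (Rmin d1 d2).

Lemma common_radius : 0 < de /\ de <= d1 /\ de <= d2.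
Proof. split; [apply Rmin_glb_lt; auto|split; [apply Rmin_l|apply Rmin_r]]. Qed.

Lemma delay_in_common u : - de <= u <= de -> - de <= W1 u Fin.F1 <= de.
Proof.
  intros Hu. pose proof common_radius as [Hde [Hde1 Hde2]].
  apply Rabs_le_iff. eapply Rle_trans; [apply (first_coord_small d1 W1 W1'); auto; lra|].
  apply Rabs_le_iff, Hu.
Qed.

Lemma gap_has_derivative i :
  has_derivative_on (- de) de (fun t => vsub (W1 t) (W2 t) i) (fun t => vsub (W1' t) (W2' t) i).
Proof.
  pose proof common_radius as [Hde [Hde1 Hde2]].
  apply has_derivative_on_minus;
    [apply (has_derivative_on_subinterval (- d1) d1)|apply (has_derivative_on_subinterval (- d2) d2)];
    try apply C1_on_has_derivative; auto; lra.
Qed.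

Section GapBound.
Variable M : R.
Hypothesis HM : forall u, - de <= u <= de -> nrm (vsub (W1' u) (W2' u)) <= M.

Lemma gap_W_le v : - de <= v <= de -> nrm (vsub (W1 v) (W2 v)) <= kN * M * de.
Proof.
  intros Hv. pose proof common_radius as [Hde [Hde1 Hde2]].
  assert (HM0 : 0 <= M) by (apply (Rle_trans _ _ _ (nrm_nonneg (vsub (W1' 0) (W2' 0)))), HM; lra).
  pose proof (mean_value_norm_le nrm c1 c2 Hc1 Hcoord Hsup (- de) de M
                (fun t => vsub (W1 t) (W2 t)) (fun t => vsub (W1' t) (W2' t)) gap_has_derivative HM
                v 0 Hv ltac:(lra)) as Hmv.
  cbv beta in Hmv. rewrite HW10, HW20 in Hmv.
  replace (vsub (vsub (W1 v) (W2 v)) (vsub vzero vzero)) with (vsub (W1 v) (W2 v)) in Hmv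
    by vec_ring.
  rewrite Rminus_0_r in Hmv. eapply Rle_trans; [exact Hmv|].
  unfold kN. apply Rmult_le_compat_l; [repeat apply Rmult_le_pos; auto|apply Rabs_le_iff, Hv].
Qed.

Lemma gap_first_coord_le u : - de <= u <= de ->
  Rabs (W1 u Fin.F1 - W2 u Fin.F1) <= c1 * (kN * M * de).
Proof.
  intros Hu. apply (Rle_trans _ _ _ (Hcoord (vsub (W1 u) (W2 u)) Fin.F1)).
  apply Rmult_le_compat_l; auto. apply gap_W_le, Hu.
Qed.

Lemma gap_W_delay_le u : - de <= u <= de ->
  nrm (vsub (W1 (W1 u Fin.F1)) (W2 (W2 u Fin.F1))) <= kN * M * de + kW * (c1 * (kN * M * de)).
Proof.
  intros Hu. pose proof common_radius as [Hde [Hde1 Hde2]]. pose proof (delay_in_common u Hu).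
  eapply Rle_trans; [apply (nrm_sub_triangle _ (W2 (W1 u Fin.F1)))|].
  apply Rplus_le_compat; [apply gap_W_le; auto|].
  eapply Rle_trans; [apply (W_lipschitz d2 W2 W2'); auto; [lra|apply Hw2; lra]|].
  apply Rmult_le_compat_l; [apply kW_nonneg|apply gap_first_coord_le, Hu].
Qed.

Lemma gap_W'_delay_le u : - de <= u <= de ->
  nrm (vsub (W1' (W1 u Fin.F1)) (W2' (W2 u Fin.F1))) <= M + kW' * (c1 * (kN * M * de)).
Proof.
  intros Hu. pose proof common_radius as [Hde [Hde1 Hde2]]. pose proof (delay_in_common u Hu).
  eapply Rle_trans; [apply (nrm_sub_triangle _ (W2' (W1 u Fin.F1)))|].
  apply Rplus_le_compat; [apply HM; auto|].
  eapply Rle_trans; [apply (W'_lipschitz d2 W2 W2'); auto; [lra|apply Hw2; lra]|].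
  apply Rmult_le_compat_l; [apply kW'_nonneg|apply gap_first_coord_le, Hu].
Qed.

Lemma gap_contraction u : - de <= u <= de ->
  nrm (vsub (W1' u) (W2' u)) <= 0 + (kgap * de + (C0 + C1)) * M.
Proof.
  intros Hu. pose proof common_radius as [Hde [Hde1 Hde2]].
  pose proof (Rmax_l d1 d2); pose proof (Rmax_r d1 d2); pose proof kW_nonneg; pose proof kW'_nonneg.
  assert (Hmax : Rmax d1 d2 * ksize <= eps) by (apply Rmax_case; auto).
  assert (Hmixed : Neps nrm eps P u (W1 u) (W1 (W1 u Fin.F1)) (W2' u) (W2' (W2 u Fin.F1))).
  { apply (Neps_of_small (Rmax d1 d2)); auto; [apply Rabs_le_iff; lra| | | |].
    - apply (Rle_trans _ (kW * d1)); [apply (W_small d1 W1 W1'); auto; lra|].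
      apply Rmult_le_compat_l; lra.
    - apply (Rle_trans _ (kW * d1)); [apply (W_small d1 W1 W1'); auto; apply Hw1; lra|].
      apply Rmult_le_compat_l; lra.
    - apply (Rle_trans _ (kW' * d2)); [apply (W'_near_P d2 W2 W2'); auto; lra|].
      apply Rmult_le_compat_l; lra.
    - apply (Rle_trans _ (kW' * d2)); [apply (W'_near_P d2 W2 W2'); auto; apply Hw2; lra|].
      apply Rmult_le_compat_l; lra. }
  rewrite (Hsol1 u) at 1 by lra. rewrite (Hsol2 u) at 1 by lra.
  eapply Rle_trans; [apply (H_sub_le u u); auto; [apply HNW2|apply HNW2|apply HNW1]; lra|].
  rewrite Rminus_diag, Rabs_R0, Rmult_0_r, Rplus_0_l.
  pose proof (gap_W_le u Hu). pose proof (gap_W_delay_le u Hu). pose proof (gap_W'_delay_le u Hu).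
  pose proof (HM u Hu).
  apply Rle_trans with (L0 * (kN * M * de) + L1 * (kN * M * de + kW * (c1 * (kN * M * de)))
                        + C0 * M + C1 * (M + kW' * (c1 * (kN * M * de)))).
  - repeat apply Rplus_le_compat; apply Rmult_le_compat_l; auto.
  - unfold kgap. right; ring.
Qed.

End GapBound.

Hypothesis Hcontr : kgap * de + (C0 + C1) < 1.

Lemma derivative_gap_zero u : - de <= u <= de -> nrm (vsub (W1' u) (W2' u)) = 0.
Proof.
  intros Hu. pose proof common_radius as [Hde [Hde1 Hde2]]. pose proof kgap_nonneg.
  apply Rle_antisym; [|apply nrm_nonneg].
  rewrite <- (Rdiv_0_l (1 - (kgap * de + (C0 + C1)))).
  apply (le_of_sup_contraction (fun u => - de <= u <= de) (fun u => nrm (vsub (W1' u) (W2' u)))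
           (2 * eps)); auto; [nra| |apply gap_contraction].
  intros v Hv. pose proof (nrm_sub_triangle (W1' v) P (W2' v)) as Htri.
  rewrite (norm_sub_sym nrm Hnorm P) in Htri.
  pose proof (Neps_le _ _ _ _ _ (HNW1 v ltac:(lra))).
  pose proof (Neps_le _ _ _ _ _ (HNW2 v ltac:(lra))). lra.
Qed.

Lemma solutions_agree t : Rabs t <= de -> forall i, W1 t i = W2 t i.
Proof.
  intros Ht i. apply Rabs_le_iff in Ht. pose proof common_radius as [Hde _].
  pose proof (mean_value_norm_le nrm c1 c2 Hc1 Hcoord Hsup (- de) de 0
                (fun t => vsub (W1 t) (W2 t)) (fun t => vsub (W1' t) (W2' t)) gap_has_derivative
                (fun u Hu => Req_le _ _ (derivative_gap_zero u Hu)) t 0 Ht ltac:(lra)) as Hmv.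
  cbv beta in Hmv. rewrite HW10, HW20 in Hmv.
  replace (vsub (vsub (W1 t) (W2 t)) (vsub vzero vzero)) with (vsub (W1 t) (W2 t)) in Hmv
    by vec_ring.
  rewrite Rmult_0_r, Rmult_0_l in Hmv.
  pose proof (norm_eq0 nrm Hnorm _ (Rle_antisym _ _ Hmv (nrm_nonneg _)) i) as Hi0.
  unfold vsub in Hi0. lra.
Qed.

End TwoSolutions.

Lemma uniqueness_radius : exists dstar, 0 < dstar /\ forall d, 0 < d <= dstar ->
  d * ksize <= eps /\ kgap * d + (C0 + C1) < 1.
Proof.
  pose proof kW_nonneg; pose proof kW'_nonneg; pose proof kgap_nonneg.
  assert (Hk : 0 < ksize) by (unfold ksize; lra).
  set (dstar := Rmin (eps / ksize) ((1 - (C0 + C1)) / (2 * (kgap + 1)))).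
  assert (Hd1 : dstar * ksize <= eps).
  { apply Rle_trans with (eps / ksize * ksize); [apply Rmult_le_compat_r; [lra|apply Rmin_l]|].
    right; field; lra. }
  assert (Hd2 : kgap * dstar <= (1 - (C0 + C1)) / 2).
  { apply Rle_trans with (kgap * ((1 - (C0 + C1)) / (2 * (kgap + 1))));
      [apply Rmult_le_compat_l; [lra|apply Rmin_r]|].
    apply (Rmult_le_reg_r (2 * (kgap + 1))); [lra|].
    field_simplify; [nra|lra]. }
  exists dstar; split; [apply Rmin_glb_lt; apply Rdiv_lt_0_compat; lra|].
  intros d [Hd Hdd]. split.
  - apply Rle_trans with (dstar * ksize); [apply Rmult_le_compat_r|]; lra.
  - apply Rle_lt_trans with (kgap * dstar + (C0 + C1)); [|lra].
    apply Rplus_le_compat_r, Rmult_le_compat_l; lra.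
Qed.

End DelayEquation.

Theorem theorem4p4 (m : nat)
  (nrm : vec (S m) -> R) (Hnorm : is_norm nrm)
  (U : R -> vec (S m) -> vec (S m) -> vec (S m) -> vec (S m) -> Prop)
  (HU : open5 nrm U)
  (H : R -> vec (S m) -> vec (S m) -> vec (S m) -> vec (S m) -> vec (S m))
  (Hcont : continuous_on5 nrm U H)
  (P : vec (S m))
  (HP : P = H 0 vzero vzero P P)
  (Hp1 : Rabs (P Fin.F1) <= 1)
  (eps Lam L0 L1 C0 C1 : R)
  (Heps : 0 < eps)
  (HLam : 0 <= Lam) (HL0 : 0 <= L0) (HL1 : 0 <= L1) (HC0 : 0 <= C0) (HC1 : 0 <= C1)
  (HN : forall t z0 z1 x0 x1, Neps nrm eps P t z0 z1 x0 x1 -> U t z0 z1 x0 x1)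
  (Hi : forall t t' z0 z1 x0 x1,
     Neps nrm eps P t z0 z1 x0 x1 -> Neps nrm eps P t' z0 z1 x0 x1 ->
     nrm (vsub (H t' z0 z1 x0 x1) (H t z0 z1 x0 x1)) <= Lam * Rabs (t' - t))
  (Hii : forall t z0 z1 z0' z1' x0 x1,
     Neps nrm eps P t z0 z1 x0 x1 -> Neps nrm eps P t z0' z1' x0 x1 ->
     nrm (vsub (H t z0' z1' x0 x1) (H t z0 z1 x0 x1))
       <= L0 * nrm (vsub z0' z0) + L1 * nrm (vsub z1' z1))
  (Hiii : forall t z0 z1 x0 x1 x0' x1',
     Neps nrm eps P t z0 z1 x0 x1 -> Neps nrm eps P t z0 z1 x0' x1' ->
     nrm (vsub (H t z0 z1 x0' x1') (H t z0 z1 x0 x1))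
       <= C0 * nrm (vsub x0' x0) + C1 * nrm (vsub x1' x1))
  (HC : C0 + C1 < 1)
  (Hiv : forall t z0 z1 x0 x1,
     Neps nrm eps P t z0 z1 x0 x1 -> Rabs (H t z0 z1 x0 x1 Fin.F1) <= 1) :
  exists dstar, 0 < dstar /\
  forall (d1 d2 : R) (W1 W1' W2 W2' : R -> vec (S m)),
    0 < d1 <= dstar -> 0 < d2 <= dstar ->
    (* conditions on W^1 *)
    C1_on (- d1) d1 W1 W1' ->
    (forall t, - d1 <= t <= d1 -> - d1 <= W1 t Fin.F1 <= d1) ->
    (forall t, - d1 <= t <= d1 ->
       W1' t = H t (W1 t) (W1 (W1 t Fin.F1)) (W1' t) (W1' (W1 t Fin.F1))) ->
    W1 0 = vzero -> W1' 0 = P ->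
    (forall t, - d1 <= t <= d1 ->
       Neps nrm eps P t (W1 t) (W1 (W1 t Fin.F1)) (W1' t) (W1' (W1 t Fin.F1))) ->
    (* conditions on W^2 *)
    C1_on (- d2) d2 W2 W2' ->
    (forall t, - d2 <= t <= d2 -> - d2 <= W2 t Fin.F1 <= d2) ->
    (forall t, - d2 <= t <= d2 ->
       W2' t = H t (W2 t) (W2 (W2 t Fin.F1)) (W2' t) (W2' (W2 t Fin.F1))) ->
    W2 0 = vzero -> W2' 0 = P ->
    (forall t, - d2 <= t <= d2 ->
       Neps nrm eps P t (W2 t) (W2 (W2 t Fin.F1)) (W2' t) (W2' (W2 t Fin.F1))) ->
    forall t, Rabs t <= Rmin d1 d2 -> forall i, W1 t i = W2 t i.
Proof.
  destruct (coord_le_norm _ nrm Hnorm) as [c1 [Hc1 Hcoord]].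
  destruct (norm_le_sup _ nrm Hnorm) as [c2 [Hc2 Hsup]].
  destruct (uniqueness_radius nrm P eps Lam L0 L1 C0 C1 c1 c2 Hnorm Heps HLam HL0 HL1 HC1 HC
              (Rlt_le _ _ Hc1) Hc2) as [dstar [Hdstar Hrad]].
  exists dstar; split; [exact Hdstar|].
  intros d1 d2 W1 W1' W2 W2' Hd1 Hd2 HW1 Hw1 Hsol1 HW10 _ HNW1 HW2 Hw2 Hsol2 HW20 _ HNW2.
  destruct (Hrad d1 Hd1) as [Hsmall1 _], (Hrad d2 Hd2) as [Hsmall2 _].
  assert (Hde : 0 < Rmin d1 d2 <= dstar)
    by (split; [apply Rmin_glb_lt|apply (Rle_trans _ d1); [apply Rmin_l|]]; lra).
  destruct (Hrad _ Hde) as [_ Hcontr].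
  apply (solutions_agree nrm H P eps Lam L0 L1 C0 C1 c1 c2 Hnorm HP Heps HLam HL0 HL1 HC0 HC1
           Hi Hii Hiii HC Hiv (Rlt_le _ _ Hc1) Hc2 Hcoord Hsup d1 d2 W1 W1' W2 W2'); tauto.
Qed.
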